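(* Let $C$ be an $E$-linear code of length $2n$. Then (1) $C^{\perp_{S_L}}=\kappa (C_{Res})^{\perp_S}\oplus \zeta (C_{Res})^{\perp_S}$; (2) $C^{\perp_{S_R}}=\kappa (C_{Tor})^{\perp_S}\oplus \zeta \mathbb{F}_2^{2n}$; (3) $C^{\perp_S}=\kappa (C_{Tor})^{\perp_S}\oplus \zeta (C_{Res})^{\perp_S}$.
   Context: $E=\langle \kappa,\tau \mid 2\kappa=2\tau=0,\ \kappa^2=\kappa,\ \tau^2=\tau,\ \kappa\tau=\kappa,\ \tau\kappa=\tau\rangle$ is the non-unital ring $\{0,\kappa,\tau,\zeta\}$, $\zeta=\kappa+\tau$, with $e\kappa=e\tau=e$, $e\zeta=0$ for all $e\in E$. Every $e\in E$ is uniquely $u\kappa+v\zeta$ ($u,v\in\mathbb{F}_2$); $\pi(u\kappa+v\zeta)=u$, componentwise. For $v\in\mathbb{F}_2^m$ and $e\in E$, $ev=(ev_1,\dots,ev_m)$ with $0\cdot e=0$, $1\cdot e=e$; for binary codes $A,B$, $\kappa A\oplus\zeta B=\{\kappa a+\zeta b: a\in A,b\in B\}$. An $E$-linear code of length $2n$ is a left $E$-submodule $C\subseteq E^{2n}$; $C_{Res}=\pi(C)$, $C_{Tor}=\{v\in\mathbb{F}_2^{2n}:\zeta v\in C\}$. Symplectic inner product (over $E$ or $\mathbb{F}_2$): $\langle (u|v),(u'|v')\rangle_s=\sum_i u_iv'_i+\sum_i v_iu'_i$. For binary $B$, $B^{\perp_S}=\{z\in\mathbb{F}_2^{2n}:\langle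 z,w\rangle_s=0\ \forall w\in B\}$. For $E$-linear $C$: $C^{\perp_{S_L}}=\{z\in E^{2n}:\langle z,w\rangle_s=0\ \forall w\in C\}$, $C^{\perp_{S_R}}=\{z\in E^{2n}:\langle w,z\rangle_s=0\ \forall w\in C\}$, $C^{\perp_S}=C^{\perp_{S_L}}\cap C^{\perp_{S_R}}$. *)

From HB Require Import structures.
From mathcomp Require Import all_boot all_order all_algebra.
Set Implicit Arguments. Unset Strict Implicit. Unset Printing Implicit Defensive.
Import GRing.Theory.
Local Open Scope ring_scope.

(* The ring E = {0, kappa, tau, zeta} is represented through the unique
   decomposition e = u*kappa + v*zeta (u, v in F_2): the element u kappa + v zeta
   is the pair (u, v). *)
Definition E : Type := ('F_2 * 'F_2)%type.

Definition Ezero : E := (0, 0).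
Definition kappa : E := (1, 0).
Definition zeta  : E := (0, 1).
Definition tau   : E := (1, 1).

Definition Eadd (x y : E) : E := (x.1 + y.1, x.2 + y.2).

(* Multiplication: e*kappa = e, e*zeta = 0, extended bilinearly:
   (u kappa + v zeta)(u' kappa + v' zeta) = u' (u kappa + v zeta). *)
Definition Emul (x y : E) : E := (x.1 * y.1, x.2 * y.1).

Definition Epi (x : E) : 'F_2 := x.1.

Definition Escale (b : 'F_2) (e : E) : E := (b * e.1, b * e.2).

Lemma E_presentation :
  (Eadd kappa kappa = Ezero /\ Eadd tau tau = Ezero) /\
  (Emul kappa kappa = kappa /\ Emul tau tau = tau) /\
  (Emul kappa tau = kappa /\ Emul tau kappa = tau) /\
  zeta = Eadd kappa tau /\
  (forall e : E, Emul e kappa = e /\ Emul e tau = e /\ Emul e zeta = Ezero).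
Proof.
have h11 : (1 + 1 : 'F_2) = 0 by apply/eqP.
rewrite /Eadd /Emul /kappa /tau /zeta /Ezero /= h11 ?mulr1 ?mulr0 ?add0r ?addr0.
do !split=> //; move: e => [u v]; rewrite /= ?mulr1 ?mulr0 //.
Qed.

(* Vectors of length 2n, written (u | v) with u, v of length n:
   index lshift n i is u_i, rshift n i is v_i. *)
Definition Evec (n : nat) := {ffun 'I_(n + n) -> E}.
Definition Bvec (n : nat) := {ffun 'I_(n + n) -> 'F_2}.

Definition Evadd n (x y : Evec n) : Evec n := [ffun i => Eadd (x i) (y i)].
Definition Evscale n (e : E) (x : Evec n) : Evec n := [ffun i => Emul e (x i)].
Definition Evzero n : Evec n := [ffun _ => Ezero].

Definition Ebv n (e : E) (v : Bvec n) : Evec n := [ffun i => Escale (v i) e].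

Definition Elinear n (C : {set Evec n}) : Prop :=
  [/\ Evzero n \in C,
      (forall x y, x \in C -> y \in C -> Evadd x y \in C) &
      (forall e x, x \in C -> Evscale e x \in C)].

Definition Res n (C : {set Evec n}) : {set Bvec n} :=
  [set ([ffun i => Epi (x i)] : Bvec n) | x : Evec n in C].
Definition Tor n (C : {set Evec n}) : {set Bvec n} :=
  [set v : Bvec n | Ebv zeta v \in C].

Definition Esum (s : seq E) : E := foldr Eadd Ezero s.
Definition sympE n (x y : Evec n) : E :=
  Eadd (Esum [seq Emul (x (lshift n i)) (y (rshift n i)) | i <- enum 'I_n])
       (Esum [seq Emul (x (rshift n i)) (y (lshift n i)) | i <- enum 'I_n]).
Definition sympB n (x y : Bvec n) : 'F_2 :=
  \sum_(i < n) x (lshift n i) * y (rshift n i)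
  + \sum_(i < n) x (rshift n i) * y (lshift n i).

Definition perpB n (B : {set Bvec n}) : {set Bvec n} :=
  [set z | [forall w in B, sympB z w == 0]].
Definition perpL n (C : {set Evec n}) : {set Evec n} :=
  [set z | [forall w in C, sympE z w == Ezero]].
Definition perpR n (C : {set Evec n}) : {set Evec n} :=
  [set z | [forall w in C, sympE w z == Ezero]].
Definition perpS n (C : {set Evec n}) : {set Evec n} := perpL C :&: perpR C.

Definition kzsum n (A B : {set Bvec n}) : {set Evec n} :=
  [set x | [exists a in A, exists b in B, x == Evadd (Ebv kappa a) (Ebv zeta b)]].

From mathcomp Require Import all_boot all_order all_algebra.
Set Implicit Arguments. Unset Strict Implicit. Unset Printing Implicit Defensive.
Import GRing.Theory.
Local Open Scope ring_scope.

(* Write x = kappa a + zeta b and y = kappa a' + zeta b' with binary a, b, a', b'.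
   Since e kappa = e and e zeta = 0, only the kappa-coordinate of the right
   argument survives in a product: <x, y>_s = kappa <a, a'>_s + zeta <b, a'>_s.
   Hence left orthogonality to C constrains both coordinates of x against
   Res C, while right orthogonality constrains only the kappa-coordinate of x,
   against the kappa- and zeta-coordinates of codewords.  For a linear code
   these coordinates all lie in Tor C (zeta w and w + kappa w are in C) and
   exhaust it (v is the zeta-coordinate of zeta v).  Finally Res C <= Tor C,
   so in (3) the condition on the kappa-coordinate from Res C is absorbed. *)

Definition kappa_coord n (x : Evec n) : Bvec n := [ffun i => (x i).1].
Definition zeta_coord n (x : Evec n) : Bvec n := [ffun i => (x i).2].

Lemma F2_addrr (x : 'F_2) : x + x = 0.
Proof. by rewrite addrr_pchar2 // pchar_Fp. Qed.

Lemma EsumE (s : seq E) : Esum s = (\sum_(e <- s) e.1, \sum_(e <- s) e.2).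
Proof. by elim: s => [|e s IHs]; rewrite ?big_nil ?big_cons //= IHs. Qed.

Lemma sympE_coord n (x y : Evec n) :
  sympE x y = (sympB (kappa_coord x) (kappa_coord y),
               sympB (zeta_coord x) (kappa_coord y)).
Proof.
rewrite /sympE /sympB !EsumE /Eadd /= !big_map /=.
by congr (_, _); congr (_ + _); apply: eq_bigr => i _; rewrite !ffunE.
Qed.

Lemma sympBC n (x y : Bvec n) : sympB x y = sympB y x.
Proof. by rewrite /sympB addrC; congr (_ + _); apply: eq_bigr => i _; rewrite mulrC. Qed.

Lemma sympE_eq0 n (x y : Evec n) :
  (sympE x y == Ezero) =
  (sympB (kappa_coord x) (kappa_coord y) == 0) &&
  (sympB (zeta_coord x) (kappa_coord y) == 0).
Proof. by rewrite sympE_coord. Qed.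

Lemma zeta_coord_Ebv_zeta n (v : Bvec n) : zeta_coord (Ebv zeta v) = v.
Proof. by apply/ffunP => i; rewrite !ffunE /= mulr1. Qed.

Lemma Ebv_zeta_kappa_coord n (x : Evec n) : Ebv zeta (kappa_coord x) = Evscale zeta x.
Proof. by apply/ffunP => i; rewrite !ffunE /Escale /Emul /= mulr0 mul0r mulr1 mul1r. Qed.

Lemma Ebv_zeta_zeta_coord n (x : Evec n) :
  Ebv zeta (zeta_coord x) = Evadd x (Evscale kappa x).
Proof.
apply/ffunP => i; rewrite !ffunE /Escale /Emul /Eadd /=.
by rewrite mulr0 mulr1 mul1r mul0r F2_addrr addr0.
Qed.

Lemma mem_kzsum n (A B : {set Bvec n}) (x : Evec n) :
  (x \in kzsum A B) = (kappa_coord x \in A) && (zeta_coord x \in B).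
Proof.
rewrite inE; apply/existsP/andP => [[a /andP [Aa /exists_inP [b Bb /eqP ->]]] | [Ax Bx]].
  have -> : kappa_coord (Evadd (Ebv kappa a) (Ebv zeta b)) = a.
    by apply/ffunP => i; rewrite !ffunE /= mulr1 mulr0 addr0.
  have -> : zeta_coord (Evadd (Ebv kappa a) (Ebv zeta b)) = b.
    by apply/ffunP => i; rewrite !ffunE /= mulr1 mulr0 add0r.
  by [].
exists (kappa_coord x); rewrite Ax; apply/exists_inP; exists (zeta_coord x) => //.
apply/eqP/ffunP => i; rewrite !ffunE.
by case: (x i) => a b; rewrite /Eadd /Escale /= !mulr1 !mulr0 addr0 add0r.
Qed.

Lemma perpB_antitone n (A B : {set Bvec n}) : A \subset B -> perpB B \subset perpB A.
Proof.
move=> /subsetP sAB; apply/subsetP => z; rewrite !inE => /forall_inP zB.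
by apply/forall_inP => w /sAB; apply: zB.
Qed.

Section SymplecticDuals.

Variables (n : nat) (C : {set Evec n}).

Lemma mem_perpB_Res (z : Bvec n) :
  (z \in perpB (Res C)) = [forall w in C, sympB z (kappa_coord w) == 0].
Proof.
rewrite inE; apply/forall_inP/forall_inP => [zC w Cw | zC _ /imsetP [w Cw ->]].
  by apply: zC; apply/imsetP; exists w.
exact: zC.
Qed.

Lemma perpL_kzsum : perpL C = kzsum (perpB (Res C)) (perpB (Res C)).
Proof.
apply/setP => z; rewrite inE mem_kzsum !mem_perpB_Res.
apply/forall_inP/andP => [zC | [/forall_inP kzC /forall_inP zzC] w Cw].
  by split; apply/forall_inP => w /zC; rewrite sympE_eq0 => /andP [].
by rewrite sympE_eq0 kzC ?zzC.
Qed.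

Hypotheses (addC : forall x y, x \in C -> y \in C -> Evadd x y \in C)
           (scaleC : forall e x, x \in C -> Evscale e x \in C).

Lemma kappa_coord_Tor w : w \in C -> kappa_coord w \in Tor C.
Proof. by move=> Cw; rewrite inE Ebv_zeta_kappa_coord scaleC. Qed.

Lemma zeta_coord_Tor w : w \in C -> zeta_coord w \in Tor C.
Proof. by move=> Cw; rewrite inE Ebv_zeta_zeta_coord addC ?scaleC. Qed.

Lemma Res_sub_Tor : Res C \subset Tor C.
Proof. by apply/subsetP => _ /imsetP [w Cw ->]; apply: kappa_coord_Tor. Qed.

Lemma mem_perpB_Tor (z : Bvec n) :
  (z \in perpB (Tor C)) =
  [forall w in C, (sympB (kappa_coord w) z == 0) && (sympB (zeta_coord w) z == 0)].
Proof.
rewrite inE; apply/forall_inP/forall_inP => [zT w Cw | zC v].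
  by rewrite !(sympBC _ z) !zT ?kappa_coord_Tor ?zeta_coord_Tor.
by rewrite inE => /zC /andP [_]; rewrite zeta_coord_Ebv_zeta sympBC.
Qed.

Lemma perpR_kzsum : perpR C = kzsum (perpB (Tor C)) [set: Bvec n].
Proof.
apply/setP => z; rewrite inE mem_kzsum in_setT andbT mem_perpB_Tor.
by apply/forall_inP/forall_inP => zC w /zC; rewrite sympE_eq0.
Qed.

Lemma perpS_kzsum : perpS C = kzsum (perpB (Tor C)) (perpB (Res C)).
Proof.
apply/setP => z; rewrite inE perpL_kzsum perpR_kzsum !mem_kzsum in_setT andbT.
have /subsetP perpTor_sub_Res := perpB_antitone Res_sub_Tor.
by case: (boolP (kappa_coord z \in perpB (Tor C))) => [/perpTor_sub_Res -> | _];
  rewrite ?andbT ?andbF.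
Qed.

End SymplecticDuals.

Theorem mainTheorem6 (n : nat) (C : {set Evec n}) (HC : Elinear C) :
  [/\ perpL C = kzsum (perpB (Res C)) (perpB (Res C)),
      perpR C = kzsum (perpB (Tor C)) [set: Bvec n] &
      perpS C = kzsum (perpB (Tor C)) (perpB (Res C))].
Proof.
case: HC => _ addC scaleC.
split; first exact: perpL_kzsum.
  exact: perpR_kzsum addC scaleC.
exact: perpS_kzsum addC scaleC.
Qed.
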